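(* For any integer $k$ and any $\epsilon>0$, there exist a prior $p$, a utility function $f$ and a policy $\pi$ that is greedy with respect to $f$ (and $p$) and selects $k$ elements, such that $\beta_\pi(f,p)=\epsilon$.
   Context: Finite ground set $V$, finite state set $Y$; a realization $\phi:V\to Y$ is drawn from prior $p$; $f:2^V\times\Phi_V\to\mathbb{R}$ is a utility function. A partial realization $\psi$ maps $\mathrm{dom}(\psi)\subseteq V$ to $Y$; $\phi\sim\psi$ means agreement on $\mathrm{dom}(\psi)$. A (possibly randomized) policy $\pi$ maps the observed partial realization to the next element to select or $\bot$ (terminate); $\psi_t$ denotes observations after $t$ selections; $E(\pi,\phi)$ is the set of selected elements; $c_{\mathrm{avg}}(\pi,p)=\mathbb{E}[|E(\pi,\phi)|]$. $\Delta^f_p(v\mid\psi)=\mathbb{E}[f(\{v\}\cup\mathrm{dom}(\psi),\phi)-f(\mathrm{dom}(\psi),\phi)\mid\phi\sim\psi]$. $\pi$ is greedy if for every $\psi$ with $\pi(\psi)\ne\bot$, $\Delta^f_p(\pi(\psi)\mid\psi)=\max_{v\in V}\Delta^f_p(v\mid\psi)$. A sub-policy of $\pi$ runs like $\pi$ but may terminate earlier. For $\tau\ge0,\rho\in[0,1]$, $\pi^{\tau,\rho}$ is the sub-policy of $\pi$ that with probability $\rho$ terminates as soon as every remaining element has expected marginal gain strictly smaller than $\tau$, and otherwise terminates as soon as every remaining element has expected marginal gain at most $\tau$. For each integer $i\le c_{\mathrm{avg}}(\pi,p)$, the sub-policy of this form with $c_{\mathrm{avg}}=i$ exists and is unique;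 denote it $\pi_i$. $\Delta^u_{\pi,i}$ is the smallest $u$ such that a.s., at termination time $t$ of $\pi_i$, $\Delta^f_p(v\mid\psi_t)\le u$ for all $v$; $\Delta^l_{\pi,i}$ is the largest $u$ such that a.s. for all $t$ until $\pi_i$ terminates, $\Delta^f_p(\pi_i(\psi_t)\mid\psi_t)\ge u$. The maximal gain ratio is $\beta_\pi(f,p)=\max_{i\in\mathbb{N},\,i\le c_{\mathrm{avg}}(\pi,p)}\Delta^u_{\pi,i}/\Delta^l_{\pi,i}$. *)

From HB Require Import structures.
From mathcomp Require Import all_boot all_order all_algebra.
From mathcomp Require Import reals.
Set Implicit Arguments. Unset Strict Implicit. Unset Printing Implicit Defensive.
Import Order.TTheory GRing.Theory Num.Theory.
Local Open Scope ring_scope.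

Section AdaptiveDefs.
Variables (R : realType) (V Y : finType).

Definition realization := {ffun V -> Y}.
Definition partial := {ffun V -> option Y}.

Definition empty_partial : partial := [ffun => None].
Definition dom (psi : partial) : {set V} := [set v | psi v != None].
Definition consistent (phi : realization) (psi : partial) : bool :=
  [forall v, if psi v is Some y then phi v == y else true].

Definition is_prior (p : realization -> R) : Prop :=
  (forall phi, 0 <= p phi) /\ \sum_(phi : realization) p phi = 1.

(* expected marginal gain Delta^f_p(v | psi)
   = E[f({v} u dom psi, phi) - f(dom psi, phi) | phi ~ psi]
   (conditional expectation; for psi of probability 0 it is 0 by the x/0 = 0 convention) *)
Definition gain (p : realization -> R) (f : {set V} -> realization -> R)
    (v : V) (psi : partial) : R :=
  (\sum_(phi : realization | consistent phi psi)
      p phi * (f (v |: dom psi) phi - f (dom psi) phi))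
  / (\sum_(phi : realization | consistent phi psi) p phi).

(* deterministic policy: observed partial realization -> next element or None (= bot) *)
Definition dpolicy := partial -> option V.

Definition upd (psi : partial) (v : V) (y : Y) : partial :=
  [ffun w => if w == v then Some y else psi w].

Definition step (d : dpolicy) (phi : realization) (psi : partial) : partial :=
  if d psi is Some v then upd psi v (phi v) else psi.

Definition obs (d : dpolicy) (phi : realization) (t : nat) : partial :=
  iter t (step d phi) empty_partial.

(* final observations (policies never reselect, so at most #|V| selections) *)
Definition final_obs (d : dpolicy) (phi : realization) : partial := obs d phi #|V|.

Definition selected (d : dpolicy) (phi : realization) : {set V} := dom (final_obs d phi).

(* A (possibly randomized) policy: a random seed drawn from a finite distribution,
   together with a deterministic policy for each seed. *)
Record rpolicy := RPolicy {
  seed : finType;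
  weight : seed -> R;
  act : seed -> dpolicy
}.
Arguments weight r s : clear implicits.
Arguments act r s : clear implicits.

Definition is_rpolicy (pi : rpolicy) : Prop :=
  [/\ forall s, 0 <= weight pi s,
      \sum_(s : seed pi) weight pi s = 1 &
      forall s psi v, act pi s psi = Some v -> psi v = None].

Definition cavg (p : realization -> R) (pi : rpolicy) : R :=
  \sum_(s : seed pi) \sum_(phi : realization)
     weight pi s * p phi * (#|selected (act pi s) phi|)%:R.

Definition is_greedy (p : realization -> R) (f : {set V} -> realization -> R)
    (pi : rpolicy) : Prop :=
  forall s, 0 < weight pi s -> forall psi v, act pi s psi = Some v ->
    forall w, gain p f w psi <= gain p f v psi.

Definition selects_exactly (p : realization -> R) (pi : rpolicy) (k : nat) : Prop :=
  forall s phi, 0 < weight pi s -> 0 < p phi -> #|selected (act pi s) phi| = k.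

Definition thr_stop (p : realization -> R) (f : {set V} -> realization -> R)
    (tau : R) (strict : bool) (psi : partial) : bool :=
  [forall v, (psi v == None) ==>
     (if strict then gain p f v psi < tau else gain p f v psi <= tau)].

Definition trunc (d : dpolicy) (stop : partial -> bool) : dpolicy :=
  fun psi => if stop psi then None else d psi.

(* pi^{tau,rho}: an independent coin (true with probability rho) chooses the strict rule *)
Definition subpol (p : realization -> R) (f : {set V} -> realization -> R)
    (pi : rpolicy) (tau rho : R) : rpolicy :=
  @RPolicy (seed pi * bool)%type
    (fun sb => weight pi sb.1 * (if sb.2 then rho else 1 - rho))
    (fun sb => trunc (act pi sb.1) (thr_stop p f tau sb.2)).

Definition term_bound (p : realization -> R) (f : {set V} -> realization -> R)
    (pi : rpolicy) (u : R) : Prop :=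
  forall s phi, 0 < weight pi s -> 0 < p phi ->
    forall v, gain p f v (final_obs (act pi s) phi) <= u.

Definition sel_bound (p : realization -> R) (f : {set V} -> realization -> R)
    (pi : rpolicy) (u : R) : Prop :=
  forall s phi, 0 < weight pi s -> 0 < p phi ->
    forall t v, (t < #|V|)%N -> act pi s (obs (act pi s) phi t) = Some v ->
      u <= gain p f v (obs (act pi s) phi t).

Definition is_Du p f pi (u : R) : Prop :=
  term_bound p f pi u /\ forall u', term_bound p f pi u' -> u <= u'.
Definition is_Dl p f pi (u : R) : Prop :=
  sel_bound p f pi u /\ forall u', sel_bound p f pi u' -> u' <= u.

Definition is_pi_i p f (pi : rpolicy) (i : nat) (tau rho : R) : Prop :=
  [/\ 0 <= tau, (0 <= rho <= 1) & cavg p (subpol p f pi tau rho) = i%:R].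

(* beta_pi(f, p) = eps, i.e. eps is the maximum over integers 1 <= i <= c_avg(pi,p) of
   Delta^u_{pi,i} / Delta^l_{pi,i}  (all these quantities being well defined) *)
Definition beta_is p f (pi : rpolicy) (eps : R) : Prop :=
  [/\ (forall i : nat, (0 < i)%N -> i%:R <= cavg p pi ->
         exists tau rho, is_pi_i p f pi i tau rho),
      (forall (i : nat) tau rho du dl, (0 < i)%N -> i%:R <= cavg p pi ->
         is_pi_i p f pi i tau rho ->
         is_Du p f (subpol p f pi tau rho) du -> is_Dl p f (subpol p f pi tau rho) dl ->
         dl != 0 /\ du / dl <= eps) &
      (exists (i : nat) tau rho du dl, [/\ (0 < i)%N /\ i%:R <= cavg p pi,
         is_pi_i p f pi i tau rho,
         is_Du p f (subpol p f pi tau rho) du, is_Dl p f (subpol p f pi tau rho) dl &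
         du / dl = eps])].

End AdaptiveDefs.

From HB Require Import structures.
From mathcomp Require Import all_boot all_order all_algebra.
From mathcomp Require Import reals.
From mathcomp Require Import lra zify.
Set Implicit Arguments. Unset Strict Implicit. Unset Printing Implicit Defensive.
Import Order.TTheory GRing.Theory Num.Theory.
Local Open Scope ring_scope.

(* Take V = option 'I_k, whose element None is a special element o, a single
   realization, and f(S) = 1 + r + ... + r^(n-1) + [o \in S and n = k] eps r^(k-1),
   where n is the number of regular elements (Some j) of S and r = eps / (1 + eps),
   so that 0 < r < 1 and r < eps.  A fresh regular element has gain at least r^n,
   while o has gain 0 until all regular elements are chosen; hence filling in the
   regular elements in any order is greedy and selects k elements.  Since the
   strict threshold rule stops at most one step after the non-strict one, a
   truncation pi^{tau,rho} with integer average cost i stops after exactly i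
   selections on every branch of positive probability.  Its last selection has
   gain r^(i-1), and the best remaining gain is r^i if i < k but eps r^(k-1),
   the gain of o, if i = k: the ratios are r < eps and exactly eps. *)

Section PartialRealizations.
Variables (V Y : finType).

Lemma in_dom (psi : partial V Y) v : (v \in dom psi) = (psi v != None).
Proof. by rewrite inE. Qed.

Lemma notin_dom (psi : partial V Y) v : (v \notin dom psi) = (psi v == None).
Proof. by rewrite in_dom negbK. Qed.

Lemma dom_empty : dom (empty_partial V Y) = set0.
Proof. by apply/setP => v; rewrite in_dom ffunE inE. Qed.

Lemma dom_upd (psi : partial V Y) v y : dom (upd psi v y) = v |: dom psi.
Proof. by apply/setP => w; rewrite in_setU1 !in_dom ffunE; case: (w == v). Qed.

End PartialRealizations.

Section SingleRealization.
Variables (R : realType) (V : finType).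

Definition phi_tt : realization V unit := [ffun => tt].

Lemma realization_unit (phi : realization V unit) : phi = phi_tt.
Proof. by apply/ffunP => v; rewrite ffunE; case: (phi v). Qed.

Lemma sum_realization_unit (F : realization V unit -> R) :
  \sum_(phi : realization V unit) F phi = F phi_tt.
Proof. by rewrite (big_pred1 phi_tt) // => phi /=; rewrite [phi]realization_unit eqxx. Qed.

Lemma consistent_unit (phi : realization V unit) psi : consistent phi psi.
Proof. by apply/forallP => v; case: (psi v) => // -[]; case: (phi v). Qed.

Lemma sum_consistent_unit psi (F : realization V unit -> R) :
  \sum_(phi | consistent phi psi) F phi = F phi_tt.
Proof.
rewrite (big_pred1 phi_tt) // => phi /=.
by rewrite (realization_unit phi) eqxx consistent_unit.
Qed.

Lemma gain_unit (f : {set V} -> realization V unit -> R) v psi :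
  gain (fun=> 1) f v psi = f (v |: dom psi) phi_tt - f (dom psi) phi_tt.
Proof. by rewrite /gain !sum_consistent_unit divr1 mul1r. Qed.

End SingleRealization.

Section RegularElements.
Variable T : finType.

Definition regular (S : {set option T}) : {set T} := Some @^-1: S.

Lemma regular_setU1_Some j (S : {set option T}) : regular (Some j |: S) = j |: regular S.
Proof. by apply/setP => i; rewrite !inE. Qed.

Lemma regular_setU1_None (S : {set option T}) : regular (None |: S) = regular S.
Proof. by apply/setP => i; rewrite !inE. Qed.

Lemma card_regular (S : {set option T}) : None \notin S -> #|S| = #|regular S|.
Proof.
move=> NS; rewrite -[#|regular S|](card_imset _ (@Some_inj _)); apply: eq_card => -[i|].
  by rewrite mem_imset ?inE //; exact: Some_inj.
by rewrite (negbTE NS); apply/esym/negP => /imsetP [].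
Qed.

Lemma card_regular_ltP (S : {set option T}) :
  reflect (exists j, Some j \notin S) (#|regular S| < #|T|)%N.
Proof.
rewrite -(cardsC (regular S)) -{1}[#|regular S|]addn0 ltn_add2l.
by apply: (iffP card_gt0P) => -[j jS]; exists j; move: jS; rewrite !inE.
Qed.

End RegularElements.

Definition first_false (c : pred nat) (N : nat) : Prop :=
  (forall m, (m < N)%N -> c m) /\ ~~ c N.

Lemma first_false_exists (c : pred nat) n : ~~ c n -> exists N, first_false c N.
Proof.
move=> cn; have exNc : exists n, ~~ c n by exists n.
have [N cN minN] := ex_minnP exNc.
exists N; split=> // m ltmN; apply/negPn/negP => cm.
by have := minN m cm; rewrite leqNgt ltmN.
Qed.

Lemma first_false_le (c c' : pred nat) N N' :
  (forall n, c n -> c' n) -> first_false c N -> first_false c' N' -> (N <= N')%N.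
Proof.
move=> cc' [cN _] [_ c'N']; rewrite leqNgt; apply: contraNN c'N' => ltN'N.
exact: cc' (cN _ ltN'N).
Qed.

Lemma first_false_leS (c c' : pred nat) N N' :
  (forall n, c' n.+1 -> c n) -> first_false c N -> first_false c' N' -> (N' <= N.+1)%N.
Proof.
move=> c'c [_ cN] [c'N' _]; rewrite leqNgt; apply: contraNN cN => ltNN'.
exact: c'c (c'N' _ ltNN').
Qed.

Lemma sum_unit_bool (M : nmodType) (F : unit * bool -> M) :
  \sum_s F s = F (tt, true) + F (tt, false).
Proof.
rewrite (eq_bigr (fun s => F (s.1, s.2))) => [|[[] b] //].
by rewrite -(pair_bigA _ (fun u b => F (u, b))) (big_pred1 tt) ?big_bool // => -[].
Qed.

Lemma convex_nat_eq (F : realFieldType) (rho : F) (m n i : nat) :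
  0 <= rho <= 1 -> (m <= n <= m.+1)%N ->
  rho * n%:R + (1 - rho) * m%:R = i%:R ->
  (0 < rho -> n = i) /\ (0 < 1 - rho -> m = i).
Proof.
move=> /andP[rho_ge0 rho_le1] lemnSm mix.
have [n_eq|n_eq] : n = m \/ n = m.+1 by lia.
  have /eqP : (m%:R : F) = i%:R by rewrite -mix n_eq -mulrDl addrC subrK mul1r.
  by rewrite n_eq eqr_nat => /eqP.
rewrite n_eq -natr1 in mix; rewrite n_eq; split=> rho_pos.
  have : (m%:R : F) < i%:R by lra.
  have : (i%:R : F) <= m%:R + 1 by lra.
  by rewrite natr1 ler_nat ltr_nat; lia.
have : (m%:R : F) <= i%:R by lra.
have : (i%:R : F) < m%:R + 1 by lra.
by rewrite natr1 ler_nat ltr_nat; lia.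
Qed.

Section FillingPolicies.
Variables (T Y : finType).
Local Notation V := (option T).

Definition fills_while (c : pred nat) (D : dpolicy V Y) : Prop :=
  forall psi : partial V Y, None \notin dom psi ->
    if c #|regular (dom psi)|
    then exists2 j, D psi = Some (Some j) & Some j \notin dom psi
    else D psi = None.

Lemma fills_while_trunc (c : pred nat) D (stop : partial V Y -> bool) (s : pred nat) :
  fills_while c D ->
  (forall psi, None \notin dom psi -> c #|regular (dom psi)| ->
     stop psi = s #|regular (dom psi)|) ->
  fills_while (fun n => c n && ~~ s n) (trunc D stop).
Proof.
move=> fillD stopE psi Npsi; have := fillD psi Npsi; rewrite /trunc /=.
case: ifP => [cn [j Dj jfree] | _ ->]; last by case: (stop psi).
by rewrite stopE // Dj; case: (s _) => //; exists j.
Qed.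

Variables (c : pred nat) (D : dpolicy V Y) (N : nat).
Hypotheses (fillD : fills_while c D) (firstN : first_false c N).

Lemma obs_fill phi t :
  None \notin dom (obs D phi t) /\ #|regular (dom (obs D phi t))| = minn t N.
Proof.
have [cN ncN] := firstN; elim: t => [|t [Npsi IH]].
  rewrite /obs /= dom_empty inE min0n; split=> //.
  by apply/eqP; rewrite cards_eq0; apply/eqP/setP => i; rewrite !inE.
rewrite [obs _ _ _.+1]/obs iterS -/(obs D phi t) /step.
have := fillD Npsi; rewrite IH; case: (ltnP t N) => [ltN|leN].
  rewrite cN // => -[j -> jfree]; split.
    by rewrite dom_upd in_setU1 (negbTE Npsi).
  rewrite dom_upd regular_setU1_Some cardsU1 inE jfree IH.
  by rewrite (minn_idPl (ltnW ltN)) (minn_idPl ltN).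
by rewrite (negbTE ncN) => ->; rewrite IH; split=> //; lia.
Qed.

Lemma final_obs_fill phi :
  None \notin dom (final_obs D phi) /\ #|regular (dom (final_obs D phi))| = N.
Proof.
have [Npsi cnt] := obs_fill phi #|{: V}|; split=> //.
have := max_card (regular (dom (final_obs D phi))).
by rewrite /final_obs cnt card_option; lia.
Qed.

Lemma card_selected_fill phi : #|selected D phi| = N.
Proof. by have [Npsi cnt] := final_obs_fill phi; rewrite /selected card_regular. Qed.

Lemma fill_select phi t v : D (obs D phi t) = Some v ->
  [/\ (t < N)%N, #|regular (dom (obs D phi t))| = t &
      exists2 j, v = Some j & Some j \notin dom (obs D phi t)].
Proof.
have [Npsi cnt] := obs_fill phi t; have := fillD Npsi; rewrite cnt.
case: (ltnP t N) => [ltN|_]; last by rewrite (negbTE firstN.2) => ->.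
by rewrite firstN.1 // => -[j -> jfree] [<-]; split=> //; exists j.
Qed.

Lemma fill_select_last phi : (0 < N)%N -> exists v, D (obs D phi N.-1) = Some v.
Proof.
move=> N_gt0; have [Npsi cnt] := obs_fill phi N.-1; have := fillD Npsi.
rewrite cnt (minn_idPl (leq_pred N)) firstN.1 ?prednK // => -[j Dj _].
by exists (Some j).
Qed.

End FillingPolicies.

Section Construction.
Variables (R : realType) (k : nat) (eps : R).
Hypothesis eps_gt0 : 0 < eps.

Local Notation V := (option 'I_k).
Local Notation count psi := #|regular (dom psi)|.

Definition decay : R := eps / (1 + eps).
Definition bonus : R := eps * decay ^+ k.-1.

Definition partial_geom (n : nat) : R := \sum_(t < n) decay ^+ t.

Definition util (S : {set V}) (_ : realization V unit) : R :=
  partial_geom #|regular S|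
  + (if (None \in S) && (#|regular S| == k) then bonus else 0).

Definition prior : realization V unit -> R := fun=> 1.

Lemma decay_gt0 : 0 < decay.
Proof. by rewrite divr_gt0 // addr_gt0. Qed.

Lemma decay_lt1 : decay < 1.
Proof. by rewrite ltr_pdivrMr ?addr_gt0 // mul1r ltrDr. Qed.

Lemma decay_lt_eps : decay < eps.
Proof. by rewrite ltr_pdivrMr ?addr_gt0 // mulrDr mulr1 ltrDl mulr_gt0. Qed.

Lemma decayX_gt0 n : 0 < decay ^+ n.
Proof. exact: exprn_gt0 decay_gt0. Qed.

Lemma bonus_gt0 : 0 < bonus.
Proof. by rewrite mulr_gt0 ?decayX_gt0. Qed.

Lemma count_ltP (psi : partial V unit) :
  reflect (exists j, Some j \notin dom psi) (count psi < k)%N.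
Proof. by rewrite -[k in (_ < k)%N]card_ord; exact: card_regular_ltP. Qed.

Lemma count_le (psi : partial V unit) : (count psi <= k)%N.
Proof. by rewrite -[k in (_ <= k)%N]card_ord max_card. Qed.

Lemma partial_geomS n : partial_geom n.+1 = partial_geom n + decay ^+ n.
Proof. by rewrite /partial_geom big_ord_recr. Qed.

Lemma gain_dom psi v : v \in dom psi -> gain prior util v psi = 0.
Proof. by move=> vpsi; rewrite gain_unit (setUidPr _) ?sub1set // subrr. Qed.

Lemma gain_Some psi j : Some j \notin dom psi ->
  gain prior util (Some j) psi = decay ^+ count psi
    + (if (None \in dom psi) && ((count psi).+1 == k) then bonus else 0).
Proof.
move=> jfree; have ltk : (count psi < k)%N by apply/count_ltP; exists j.
rewrite gain_unit /util regular_setU1_Some cardsU1 inE jfree in_setU1 /=.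
rewrite add1n partial_geomS (ltn_eqF ltk) andbF addr0.
by rewrite addrAC [partial_geom _ + _]addrC addrK.
Qed.

Lemma gain_None psi : None \notin dom psi ->
  gain prior util None psi = if count psi == k then bonus else 0.
Proof.
move=> Nfree; rewrite gain_unit /util regular_setU1_None setU11 (negbTE Nfree) /=.
by rewrite addr0 [partial_geom _ + _]addrC addrK.
Qed.

Definition top_gain (n : nat) : R := if (n < k)%N then decay ^+ n else bonus.

Lemma top_gain_ge0 n : 0 <= top_gain n.
Proof. by rewrite /top_gain; case: ifP => _; rewrite ltW ?decayX_gt0 ?bonus_gt0. Qed.

Lemma gain_le_top psi v : None \notin dom psi ->
  gain prior util v psi <= top_gain (count psi).
Proof.
move=> Npsi; have [vpsi|vfree] := boolP (v \in dom psi).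
  by rewrite gain_dom // top_gain_ge0.
case: v vfree => [j|] vfree.
  have ltk : (count psi < k)%N by apply/count_ltP; exists j.
  by rewrite gain_Some // (negbTE Npsi) addr0 /top_gain ltk.
rewrite gain_None // /top_gain; case: ltnP => [ltk|_].
  by rewrite (ltn_eqF ltk) ltW ?decayX_gt0.
by case: eqP; rewrite ?lexx ?ltW ?bonus_gt0.
Qed.

Lemma gain_top psi : None \notin dom psi ->
  exists v, gain prior util v psi = top_gain (count psi).
Proof.
move=> Npsi; rewrite /top_gain; case: count_ltP => [[j jfree]|full].
  by exists (Some j); rewrite gain_Some // (negbTE Npsi) addr0.
exists None; rewrite gain_None //; suff -> : count psi = k by rewrite eqxx.
by apply/eqP; rewrite eqn_leq count_le leqNgt; apply/negP => /count_ltP.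
Qed.

Definition fill_any : dpolicy V unit := fun psi =>
  if [pick j | psi (Some j) == None] is Some j then Some (Some j) else None.

Lemma fill_any_fresh psi v : fill_any psi = Some v -> psi v = None.
Proof. by rewrite /fill_any; case: pickP => // j /eqP jfree [<-]. Qed.

Lemma fill_any_fills : fills_while (fun n => (n < k)%N) fill_any.
Proof.
move=> psi _; rewrite /fill_any; case: pickP => [j jfree | none].
  have ltk : (count psi < k)%N by apply/count_ltP; exists j; rewrite notin_dom.
  by rewrite ltk; exists j; rewrite ?notin_dom.
by case: count_ltP => // -[j]; rewrite notin_dom none.
Qed.

Lemma fill_any_greedy psi v : fill_any psi = Some v ->
  forall w, gain prior util w psi <= gain prior util v psi.
Proof.
rewrite /fill_any; case: pickP => // j; rewrite -notin_dom => jfree [<-] w.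
have ltk : (count psi < k)%N by apply/count_ltP; exists j.
have gain_j_ge : decay ^+ count psi <= gain prior util (Some j) psi.
  by rewrite gain_Some // lerDl; case: ifP => _; rewrite ?lexx ?ltW ?bonus_gt0.
have [wpsi|wfree] := boolP (w \in dom psi).
  by rewrite gain_dom // (le_trans _ gain_j_ge) ?ltW ?decayX_gt0.
case: w wfree => [i|] wfree; first by rewrite !gain_Some.
by rewrite gain_None // (ltn_eqF ltk) (le_trans _ gain_j_ge) ?ltW ?decayX_gt0.
Qed.

Definition below (tau : R) (strict : bool) (n : nat) : bool :=
  if strict then decay ^+ n < tau else decay ^+ n <= tau.

Definition proceeds (tau : R) (strict : bool) (n : nat) : bool :=
  (n < k)%N && ~~ below tau strict n.

Lemma thr_stop_clean tau strict psi : None \notin dom psi -> (count psi < k)%N ->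
  thr_stop prior util tau strict psi = below tau strict (count psi).
Proof.
move=> Npsi ltk; have gain_free v : v \notin dom psi ->
    gain prior util v psi = if v is Some _ then decay ^+ count psi else 0.
  case: v => [j|] vfree; first by rewrite gain_Some // (negbTE Npsi) addr0.
  by rewrite gain_None // (ltn_eqF ltk).
have /count_ltP [j jfree] := ltk; rewrite /below.
apply/forallP/idP => [/(_ (Some j))|stop v]; first by rewrite -notin_dom jfree gain_free.
apply/implyP; rewrite -notin_dom => /gain_free ->; case: v => [_|] //.
by case: strict stop => stop;
  [exact: lt_trans (decayX_gt0 _) stop | exact: le_trans (ltW (decayX_gt0 _)) stop].
Qed.

Lemma trunc_fills tau strict :
  fills_while (proceeds tau strict) (trunc fill_any (thr_stop prior util tau strict)).
Proof. by apply: fills_while_trunc fill_any_fills _ => psi; exact: thr_stop_clean. Qed.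

Lemma proceeds_k tau strict : ~~ proceeds tau strict k.
Proof. by rewrite /proceeds ltnn. Qed.

Lemma proceeds_strict tau n : proceeds tau false n -> proceeds tau true n.
Proof. by rewrite /proceeds /below -!ltNge -leNgt => /andP[-> /ltW]. Qed.

Lemma proceeds_strictS tau n : proceeds tau true n.+1 -> proceeds tau false n.
Proof.
rewrite /proceeds /below -leNgt -ltNge => /andP[/ltnW -> tau_le].
by rewrite (le_lt_trans tau_le) // ltr_iXn2l ?decay_gt0 ?decay_lt1.
Qed.

Definition greedy_policy : rpolicy R V unit :=
  @RPolicy R V unit unit (fun=> 1) (fun=> fill_any).

Local Notation subpolicy tau rho := (subpol prior util greedy_policy tau rho).
Local Notation threshold_policy tau strict :=
  (trunc fill_any (thr_stop prior util tau strict)).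

Lemma cavg_subpol tau rho N0 N1 :
  first_false (proceeds tau false) N0 -> first_false (proceeds tau true) N1 ->
  cavg prior (subpolicy tau rho) = rho * N1%:R + (1 - rho) * N0%:R.
Proof.
move=> N0_first N1_first; rewrite /cavg sum_unit_bool /=.
rewrite !sum_realization_unit /prior !mul1r !mulr1.
by rewrite (card_selected_fill (trunc_fills _ _) N0_first)
           (card_selected_fill (trunc_fills _ _) N1_first).
Qed.

Lemma active_branch (rho : R) : 0 <= rho <= 1 ->
  exists strict : bool, 0 < (if strict then rho else 1 - rho).
Proof.
case/andP=> _ rho_le1; have [rho_gt0|rho_le0] := ltrP 0 rho; first by exists true.
by exists false; rewrite subr_gt0 (le_lt_trans rho_le0) ?ltr01.
Qed.

Lemma branch_first_false tau rho i : 0 <= rho <= 1 ->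
  cavg prior (subpolicy tau rho) = i%:R ->
  forall strict, 0 < (if strict then rho else 1 - rho) ->
  first_false (proceeds tau strict) i.
Proof.
move=> rho01; have [N0 N0_first] := first_false_exists (proceeds_k tau false).
have [N1 N1_first] := first_false_exists (proceeds_k tau true).
rewrite (cavg_subpol _ N0_first N1_first) => mix.
have N0N1 : (N0 <= N1 <= N0.+1)%N.
  by rewrite (first_false_le (@proceeds_strict tau) N0_first N1_first)
             (first_false_leS (@proceeds_strictS tau) N0_first N1_first).
have [N1_i N0_i] := convex_nat_eq rho01 N0N1 mix.
by case=> pos; [rewrite -N1_i | rewrite -N0_i].
Qed.

Lemma gain_threshold_select tau strict N phi t v :
  first_false (proceeds tau strict) N ->
  threshold_policy tau strict (obs (threshold_policy tau strict) phi t) = Some v ->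
  (t < N)%N /\
  gain prior util v (obs (threshold_policy tau strict) phi t) = decay ^+ t.
Proof.
move=> N_first Dv; have fill := trunc_fills tau strict.
have [Npsi _] := obs_fill fill N_first phi t.
have [ltN cnt [j -> jfree]] := fill_select fill N_first Dv.
by rewrite gain_Some // (negbTE Npsi) addr0 cnt.
Qed.

Lemma term_bound_subpol tau rho i : 0 <= rho <= 1 ->
  cavg prior (subpolicy tau rho) = i%:R ->
  forall u, term_bound prior util (subpolicy tau rho) u <-> top_gain i <= u.
Proof.
move=> rho01 cavg_i u; have branch := branch_first_false rho01 cavg_i.
split=> [bound | top_le [[] strict] phi /= active _ v].
  have [strict active] := active_branch rho01.
  have [Nfinal cnt] :=
    final_obs_fill (trunc_fills tau strict) (branch _ active) (phi_tt V).
  have [v gain_v] := gain_top Nfinal; rewrite cnt in gain_v.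
  by rewrite -gain_v; apply: (bound (tt, strict)); rewrite /= ?mul1r ?ltr01.
rewrite mul1r in active.
have [Nfinal cnt] := final_obs_fill (trunc_fills tau strict) (branch _ active) phi.
by apply: le_trans (gain_le_top _ Nfinal) _; rewrite cnt.
Qed.

Lemma sel_bound_subpol tau rho i : (0 < i)%N -> 0 <= rho <= 1 ->
  cavg prior (subpolicy tau rho) = i%:R ->
  forall u, sel_bound prior util (subpolicy tau rho) u <-> u <= decay ^+ i.-1.
Proof.
move=> i_gt0 rho01 cavg_i u; have branch := branch_first_false rho01 cavg_i.
split=> [bound | u_le [[] strict] phi /= active _ t v _ Dv].
  have [strict active] := active_branch rho01; have i_first := branch _ active.
  have [v Dv] := fill_select_last (trunc_fills tau strict) i_first (phi_tt V) i_gt0.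
  have [_ <-] := gain_threshold_select i_first Dv.
  apply: (bound (tt, strict) _ _ _ _ _ _ Dv); rewrite /= ?mul1r ?ltr01 //.
  rewrite card_option card_ord ltnS.
  have [_ <- _] := fill_select (trunc_fills tau strict) i_first Dv; exact: count_le.
rewrite mul1r in active.
have [lti ->] := gain_threshold_select (branch _ active) Dv.
by apply: le_trans u_le _; rewrite ler_iXn2l ?decay_gt0 ?decay_lt1 // -ltnS prednK.
Qed.

Lemma is_Du_subpol tau rho i : is_pi_i prior util greedy_policy i tau rho ->
  forall u, is_Du prior util (subpolicy tau rho) u <-> u = top_gain i.
Proof.
case=> _ rho01 cavg_i u; have bound := term_bound_subpol rho01 cavg_i.
split=> [[/bound top_le least] | ->]; last by split=> [|u' /bound]; rewrite ?bound.
by apply/le_anti; rewrite top_le least // bound.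
Qed.

Lemma is_Dl_subpol tau rho i : (0 < i)%N -> is_pi_i prior util greedy_policy i tau rho ->
  forall u, is_Dl prior util (subpolicy tau rho) u <-> u = decay ^+ i.-1.
Proof.
move=> i_gt0 [_ rho01 cavg_i] u; have bound := sel_bound_subpol i_gt0 rho01 cavg_i.
split=> [[/bound le_top greatest] | ->]; last by split=> [|u' /bound]; rewrite ?bound.
by apply/le_anti; rewrite le_top greatest // bound.
Qed.

Lemma first_false_lt_k : first_false (fun n => (n < k)%N) k.
Proof. by split=> //; rewrite ltnn. Qed.

Lemma cavg_greedy : cavg prior greedy_policy = k%:R.
Proof.
rewrite /cavg (big_pred1 tt) => [|[]//]; rewrite sum_realization_unit /prior !mul1r.
by rewrite (card_selected_fill fill_any_fills first_false_lt_k).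
Qed.

Lemma pi_i_exists i : (0 < i <= k)%N ->
  is_pi_i prior util greedy_policy i (decay ^+ i) 0.
Proof.
case/andP=> i_gt0 i_le_k.
have i_first : first_false (proceeds (decay ^+ i) false) i.
  split=> [m ltmi|]; last by rewrite /proceeds /below lexx andbF.
  rewrite /proceeds /below -ltNge ltr_iXn2l ?decay_gt0 ?decay_lt1 // ltmi andbT.
  exact: leq_trans ltmi i_le_k.
have [N1 N1_first] := first_false_exists (proceeds_k (decay ^+ i) true).
split; rewrite ?lexx ?ler01 ?ltW ?decayX_gt0 //.
by rewrite (cavg_subpol _ i_first N1_first) mul0r subr0 mul1r add0r.
Qed.

Lemma top_gain_ratio i : (0 < i <= k)%N ->
  top_gain i / decay ^+ i.-1 = if (i < k)%N then decay else eps.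
Proof.
case/andP=> i_gt0 i_le_k; have decayX_neq0 n := lt0r_neq0 (decayX_gt0 n).
rewrite /top_gain; case: ltnP => [_|k_le_i].
  by rewrite -{1}(prednK i_gt0) exprS mulfK.
have -> : i = k by apply/eqP; rewrite eqn_leq i_le_k.
by rewrite /bonus mulfK.
Qed.

Lemma prior_is_prior : is_prior prior.
Proof. by split=> [phi|]; rewrite ?sum_realization_unit /prior ?ler01. Qed.

Lemma greedy_policy_is_rpolicy : is_rpolicy greedy_policy.
Proof.
split=> /= [s||s psi v]; [exact: ler01 | | exact: fill_any_fresh].
by rewrite (big_pred1 tt) // => -[].
Qed.

Lemma greedy_policy_greedy : is_greedy prior util greedy_policy.
Proof. by move=> s _ psi v /fill_any_greedy. Qed.

Lemma greedy_policy_selects : selects_exactly prior greedy_policy k.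
Proof.
by move=> s phi _ _; exact: card_selected_fill fill_any_fills first_false_lt_k phi.
Qed.

Lemma beta_greedy : (0 < k)%N -> beta_is prior util greedy_policy eps.
Proof.
move=> k_gt0; have cavg_le i : (i%:R <= cavg prior greedy_policy) = (i <= k)%N.
  by rewrite cavg_greedy ler_nat.
split.
- move=> i i_gt0; rewrite cavg_le => i_le_k.
  by exists (decay ^+ i), 0; apply: pi_i_exists; rewrite i_gt0.
- move=> i tau rho du dl i_gt0; rewrite cavg_le => i_le_k pi_i.
  move=> /(is_Du_subpol pi_i) -> /(is_Dl_subpol i_gt0 pi_i) ->.
  rewrite lt0r_neq0 ?decayX_gt0 // top_gain_ratio ?i_gt0 //.
  by split=> //; case: ifP => _; [exact: ltW decay_lt_eps | exact: lexx].
- have pi_k : is_pi_i prior util greedy_policy k (decay ^+ k) 0.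
    by apply: pi_i_exists; rewrite k_gt0 leqnn.
  exists k, (decay ^+ k), 0, (top_gain k), (decay ^+ k.-1); split.
  + by rewrite cavg_le.
  + exact: pi_k.
  + exact/(is_Du_subpol pi_k).
  + exact/(is_Dl_subpol k_gt0 pi_k).
  + by rewrite top_gain_ratio ?ltnn // k_gt0 leqnn.
Qed.

End Construction.

Unset Implicit Arguments. Set Strict Implicit.

Theorem theorem7 (R : realType) (k : nat) (eps : R) :
  (0 < k)%N -> 0 < eps ->
  exists (V Y : finType) (p : realization V Y -> R)
         (f : {set V} -> realization V Y -> R) (pi : rpolicy R V Y),
    [/\ is_prior p, is_rpolicy pi, is_greedy p f pi,
        selects_exactly p pi k & beta_is p f pi eps].
Proof.
move=> k_gt0 eps_gt0.
exists (option 'I_k), unit, (@prior R k), (util eps), (greedy_policy R k); split.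
- exact: prior_is_prior.
- exact: greedy_policy_is_rpolicy.
- exact: greedy_policy_greedy.
- exact: greedy_policy_selects.
- exact: beta_greedy.
Qed.
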